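(* Let $\Lambda:\mathrm{Lip}_C^\sigma(\tilde\Omega)\times\tilde\Omega\to\mathbb{R}^{d'}$ be a causal identifiable in-context map. Then (i) for all $(\mu,x,t)\in\mathrm{Lip}_C^\sigma(\tilde\Omega)\times\tilde\Omega$, $\Lambda(\mu,x,t)=\bar\Lambda(\mu_t,x)$; (ii) if moreover $\Lambda$ is continuous (weak$^*$ $\times$ Euclidean), then the map $\mathcal{X}_C^\sigma\ni(\nu,x)\mapsto\bar\Lambda(\nu,x)$ is continuous for the product of the weak$^*$ and Euclidean topologies.
   Context: $\Omega\subset\mathbb{R}^d$ compact, $\tilde\Omega=\Omega\times[0,1]$, $C>0$, $\sigma\in(0,1)$, $\bar\mu$ the time marginal of $\mu$. $\mathrm{Lip}_C^\sigma(\tilde\Omega)$: all $\mu\in\mathcal{P}(\tilde\Omega)$ with $\bar\mu(\{0\})\ge\sigma$ admitting a disintegration $d\mu(x,s)=d\mu(x|s)d\bar\mu(s)$ with $W_2(\mu(\cdot|s),\mu(\cdot|t))\le C|s-t|$ for all $s,t$. Masked measure: $\mu_t=\frac{1_{[0,t]}}{\bar\mu([0,t])}\cdot\mu$, $t\in[0,1]$. Causal: $\Lambda(\mu,x,t)=\Lambda(\mu_t,x,t)$. Identifiable: $\mu_t=\mu_{t'}$ implies $\Lambda(\mu_t,\cdot,t)=\Lambda(\mu_{t'},\cdot,t')$. Reduced map: $\bar\Lambda(\mu,x)=\Lambda(\mu,x,e(\bar\mu))$ where $e(\bar\mu)=\max\operatorname{supp}(\bar\mu)$. $\mathcal{X}_C^\sigma=\{(\mu_t,x):\mu\in\mathrm{Lip}_C^\sigma(\tilde\Omega),x\in\Omega,t\in[0,1]\}$.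 *)

From HB Require Import structures.
From mathcomp Require Import all_boot all_order all_algebra.
From mathcomp Require Import all_classical all_reals all_analysis.
From mathcomp Require Import measurable_realfun.

Set Implicit Arguments.
Unset Strict Implicit.
Unset Printing Implicit Defensive.

Import Order.TTheory GRing.Theory Num.Theory.
Import numFieldNormedType.Exports.

Local Open Scope classical_set_scope.
Local Open Scope ring_scope.

(* Borel sigma-algebra on R^d = 'rV[R]_d (generated by the open sets of its
   usual topology, which is the Euclidean topology). *)
Section Rd_borel.
Context (R : realType) (d : nat).

HB.instance Definition _ :=
  @isMeasurable.Build (sigma_display (@open 'rV[R]_d)) 'rV[R]_d
    <<s open >> (@sigma_algebra0 _ setT open) (@sigma_algebraC _ open)
    (@sigma_algebra_bigcup _ setT open).

End Rd_borel.

Section defs.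
Context (R : realType) (d : nat).
Local Notation X := 'rV[R]_d.
Local Notation T := ('rV[R]_d * R)%type.

Definition I01 : set R := `[0%R, 1%R]%classic.

Definition enorm (n : nat) (v : 'rV[R]_n) : R :=
  Num.sqrt (\sum_(i < n) v ord0 i ^+ 2).

Definition Otilde (Om : set X) : set T := Om `*` I01.

Definition is_prob (mu : set T -> \bar R) : Prop :=
  exists P : probability T R, (P : set T -> \bar R) = mu.

Definition tmarg (mu : set T -> \bar R) : set R -> \bar R :=
  pushforward mu snd.

Definition couplings (p q : set X -> \bar R) : set (probability (X * X)%type R) :=
  [set pi | forall A, measurable A ->
      pi (A `*` setT) = p A /\ pi (setT `*` A) = q A].

Definition W2sq (p q : set X -> \bar R) : \bar R :=
  ereal_inf [set (\int[pi]_z ((enorm (z.1 - z.2)) ^+ 2)%:E)%E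
            | pi in couplings p q].

Definition LipCs (C sigma : R) (Om : set X) (mu : set T -> \bar R) : Prop :=
  [/\ is_prob mu, mu (Otilde Om) = 1%E,
      (sigma%:E <= tmarg mu [set 0%R])%E &
      exists K : R -> probability X R,
        [/\ (forall s, I01 s -> K s Om = 1%E),
            (forall A, measurable A -> measurable_fun I01 (fun s => K s A)),
            (forall A B, measurable A -> measurable B ->
               mu (A `*` B) = integral (tmarg mu) (B `&` I01) (fun s => K s A)) &
            (forall s t, I01 s -> I01 t ->
               (W2sq (K s) (K t) <= ((C * `|s - t|) ^+ 2)%:E)%E)]].

Definition maskm (mu : set T -> \bar R) (t : R) : set T -> \bar R :=
  fun A => (mu (A `&` (snd @^-1` `[0%R, t]%classic)) *
            ((fine (tmarg mu `[0%R, t]%classic))^-1)%:E)%E.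

Definition msupp (m : set R -> \bar R) : set R :=
  [set s : R | forall e : R, 0 < e -> (0 < m `](s - e)%R, (s + e)%R[%classic)%E].

Definition e_end (m : set R -> \bar R) : R := sup (msupp m).

Context (d' : nat).
Local Notation Map := ((set T -> \bar R) -> X -> R -> 'rV[R]_d').

Definition causal (C sigma : R) (Om : set X) (Lam : Map) : Prop :=
  forall mu x t, LipCs C sigma Om mu -> Om x -> I01 t ->
    Lam mu x t = Lam (maskm mu t) x t.

Definition identifiable (C sigma : R) (Om : set X) (Lam : Map) : Prop :=
  forall mu t t', LipCs C sigma Om mu -> I01 t -> I01 t' ->
    (forall A, measurable A -> maskm mu t A = maskm mu t' A) ->
    forall x, Om x -> Lam (maskm mu t) x t = Lam (maskm mu t') x t'.

Definition reduced (Lam : Map) (mu : set T -> \bar R) (x : X) : 'rV[R]_d' :=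
  Lam mu x (e_end (tmarg mu)).

(* nu lies in the basic weak-* neighbourhood of mu given by the finite
   family of test functions fs (continuous on tilde Omega) and radius delta *)
Definition wclose (Om : set X) (n : nat) (fs : 'I_n -> T -> R) (delta : R)
    (mu nu : set T -> \bar R) : Prop :=
  forall i, `| fine (integral nu (Otilde Om) (fun z => (fs i z)%:E))
             - fine (integral mu (Otilde Om) (fun z => (fs i z)%:E)) | < delta.

(* continuity of Lam on Lip x tilde Omega, for the product of the weak-*
   topology (test functions C(tilde Omega)) and the Euclidean topology *)
Definition Lam_continuous (C sigma : R) (Om : set X) (Lam : Map) : Prop :=
  forall mu x t, LipCs C sigma Om mu -> Om x -> I01 t ->
  forall eps, 0 < eps ->
  exists n (fs : 'I_n -> T -> R) delta,
    [/\ forall i, {within Otilde Om, continuous (fs i)}, 0 < delta &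
        forall nu y s, LipCs C sigma Om nu -> Om y -> I01 s ->
          wclose Om fs delta mu nu -> enorm (y - x) < delta ->
          `|s - t| < delta ->
          enorm (Lam nu y s - Lam mu x t) < eps].

Definition Xset (C sigma : R) (Om : set X) (nu : set T -> \bar R) (x : X) : Prop :=
  exists mu t, [/\ LipCs C sigma Om mu, I01 t, nu = maskm mu t & Om x].

Definition reduced_continuous (C sigma : R) (Om : set X) (Lam : Map) : Prop :=
  forall nu x, Xset C sigma Om nu x ->
  forall eps, 0 < eps ->
  exists n (fs : 'I_n -> T -> R) delta,
    [/\ forall i, {within Otilde Om, continuous (fs i)}, 0 < delta &
        forall nu' y, Xset C sigma Om nu' y ->
          wclose Om fs delta nu nu' -> enorm (y - x) < delta ->
          enorm (reduced Lam nu' y - reduced Lam nu x) < eps].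

End defs.

From HB Require Import structures.
From mathcomp Require Import all_boot all_order all_algebra.
From mathcomp Require Import all_classical all_reals all_analysis.
From mathcomp Require Import measurable_realfun.
Import Order.TTheory GRing.Theory Num.Theory.
Import numFieldNormedType.Exports.
Local Open Scope classical_set_scope.
Local Open Scope ring_scope.

(* Causality and identifiability let the time argument of [Lam nu x] move
   between any two times at which the masked measures of [nu] coincide, and for
   s <= t the masks nu_s and nu_t coincide as soon as the time marginal of [nu]
   gives no mass to (s, t].  This applies to the times t and 1 when nu = mu_t,
   which lives on times <= t, and to the times e and 1 when e is the right end
   of the support of the time marginal: that support lies in [0, 1],
   and (e, 1] is a countable union of compact sets avoiding it, each covered by
   finitely many null intervals.  Hence Lam(mu, x, t) and the reduced map at
   (mu_t, x) both equal Lam(mu_t, x, 1), and continuity of the reduced map at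
   (mu_t, x) is continuity of Lam at (mu_t, x, 1), mu_t being again in Lip. *)

Lemma ge0_integral_mrestr d (T : measurableType d) (R : realType)
    (m : {measure set T -> \bar R}) (E D : set T) (mE : measurable E)
    (f : T -> \bar R) :
  measurable D -> measurable_fun D f -> (forall x, D x -> 0 <= f x)%E ->
  (\int[mrestr m mE]_(x in D) f x = \int[m]_(x in D `&` E) f x)%E.
Proof.
move=> mD mf f0.
have mDE := measurableI _ _ mD mE; have mDdE := measurableD mD mE.
rewrite -[in LHS](setUIDK D E) (ge0_integral_setU _ mDE mDdE); last 3 first.
- by rewrite setUIDK.
- by rewrite setUIDK.
- by rewrite disj_set2E; apply/eqP/seteqP; split=> x // [[_ Ex] [_ nEx]].
rewrite [X in (_ + X)%E]null_set_integral //; last 2 first.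
- exact: measurable_funS mf.
- by rewrite /= /mrestr setDKI measure0.
rewrite adde0; apply: eq_measure_integral => A mA AsDE.
by rewrite /= /mrestr setIidl // => x /AsDE[].
Qed.

Section measure_support.
Context (R : realType) (m : {measure set R -> \bar R}).

Lemma msupp_open_null (U : set R) : open U -> m U = 0%E -> U `<=` ~` msupp m.
Proof.
move=> oU mU0 x Ux suppx; have /nbhs_ballP[e /= e0 xeU] := oU x Ux.
have := suppx e e0; rewrite -(ball_itv x e) ltNge => /negP[].
rewrite -mU0 le_measure ?in_setE//; apply: open_measurable => //.
exact: ball_open.
Qed.

Lemma msupp_atom (x : R) : (0 < m [set x])%E -> msupp m x.
Proof.
move=> mx0 e e0; apply: (lt_le_trans mx0); rewrite le_measure ?in_setE//.
by move=> _ ->; rewrite /= in_itv /= ltrDl gtrDl oppr_lt0 e0.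
Qed.

Lemma compact_msupp_negligible (K : set R) :
  compact K -> K `<=` ~` msupp m -> m.-negligible K.
Proof.
rewrite compact_cover => cK Ksupp.
pose D := [set p : R * R | 0 < p.2 /\ m (ball p.1 p.2) = 0%E].
pose f p : set R := ball p.1 p.2.
have mf p : measurable (f p) by exact: open_measurable (ball_open _ _).
have [|D' D'D coverK] := cK _ D f (fun p _ => ball_open _ _).
  move=> x /Ksupp /existsNP[e /not_implyP[e0 /negP]].
  rewrite -ball_itv -leNgt => mball; exists (x, e) => /=.
    by split=> //; apply/eqP; rewrite eq_le mball measure_ge0.
  exact: ballxx.
apply: (negligibleS coverK); rewrite /cover bigcup_fset big_seq.
elim/big_ind: _ => [|A B|p /D'D].
- exact: negligible_set0.
- exact: negligibleU.
- by rewrite in_setE => -[_ mp0]; apply/negligibleP.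
Qed.

Lemma msupp_ubound_null (e b : R) :
  ubound (msupp m) e -> m `]e, b]%classic = 0%E.
Proof.
move=> supp_e; apply/negligibleP; first exact: measurable_itv.
apply: (@negligibleS _ _ _ _ (\bigcup_n `[e + n.+1%:R^-1, b]%classic)).
  move=> s /=; rewrite in_itv /= => /andP[es sb].
  exists (Num.truncn (s - e)^-1) => //=; rewrite in_itv /= sb andbT.
  rewrite -lerBrDl; apply: ltW; rewrite -[ltRHS]invrK ltf_pV2 ?posrE//.
  - exact: truncnS_gt.
  - by rewrite invr_gt0 subr_gt0.
apply: negligible_bigcup => n; apply: compact_msupp_negligible.
  exact: segment_compact.
move=> s /=; rewrite in_itv /= => /andP[ens _] /supp_e; apply/negP.
by rewrite -ltNge (lt_le_trans _ ens) // ltrDl.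
Qed.

Lemma e_end_itv (a b x : R) : msupp m x -> m (~` `[a, b]%classic) = 0%E ->
  a <= e_end m <= b /\ m `]e_end m, b]%classic = 0%E.
Proof.
move=> suppx mout.
have supp_ab : msupp m `<=` `[a, b]%classic.
  have oC : open (~` `[a, b]%classic) by rewrite openC; exact: interval_closed.
  move=> s supps; apply: contrapT => nab.
  exact: msupp_open_null oC mout s nab supps.
have ub_b : ubound (msupp m) b by move=> s /supp_ab; rewrite /= in_itv => /andP[].
have hs : has_sup (msupp m) by split; [exists x | exists b].
have ub_e := sup_upper_bound hs.
split; last exact: msupp_ubound_null.
apply/andP; split; last by apply: ge_sup => //; exists x.
have := supp_ab x suppx; rewrite /= in_itv => /andP[ax _].
exact: le_trans ax (ub_e x suppx).
Qed.

End measure_support.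

Lemma I01_1 {R : realType} : I01 (1 : R).
Proof. by rewrite /I01 /= in_itv /= ler01 lexx. Qed.

Section masked_measures.
Context {R : realType} {d : nat}.
Local Notation X := 'rV[R]_d.
Local Notation T := ('rV[R]_d * R)%type.

HB.instance Definition _ (mu : {measure set T -> \bar R}) :=
  Measure.copy (tmarg mu)
    (measure_function_pushforward__canonical__measure_function_Measure mu
       (@measurable_snd _ _ X R)).

Lemma measurable_snd_preimage (B : set R) :
  measurable B -> measurable (snd @^-1` B : set T).
Proof. by move=> mB; rewrite -[_ @^-1` _]setTI; exact: measurable_snd. Qed.

Lemma measurable_Otilde (Om : set X) : closed Om -> measurable (Otilde Om).
Proof.
move=> cOm; apply: measurableX; last exact: measurable_itv.
rewrite -[Om]setCK; apply: measurableC; apply: sub_sigma_algebra.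
exact: closed_openC.
Qed.

Lemma probability1_setI (P : probability T R) (A B : set T) :
  measurable A -> measurable B -> P A = 1%E -> P (B `&` A) = P B.
Proof.
move=> mA mB PA1.
have PAC : P (~` A) = 0%E by rewrite probability_setC // PA1 subee.
have nullBA : P (B `\` A) = 0%E.
  apply/eqP; rewrite -measure_le0 -PAC le_measure ?in_setE //.
  - exact: measurableD.
  - exact: measurableC.
by rewrite [RHS](measureDI P mB mA) [X in (X + _)%E]nullBA add0e.
Qed.

Lemma maskm_null_gap (mu : {measure set T -> \bar R}) {s t : R} : s <= t ->
  tmarg mu `]s, t]%classic = 0%E ->
  forall A, measurable A -> maskm mu s A = maskm mu t A.
Proof.
move=> st gap.
have mS (I : interval R) : measurable (snd @^-1` [set` I] : set T).
  by apply: measurable_snd_preimage; exact: measurable_itv.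
have mu_gap A : measurable A ->
    mu (A `&` snd @^-1` `[0, s]%classic) = mu (A `&` snd @^-1` `[0, t]%classic).
  move=> mA; have mAs := measurableI _ _ mA (mS `[0, s]).
  apply/eqP; rewrite eq_le le_measure ?in_setE //=; last 2 first.
  - exact: measurableI.
  - move=> x [Ax]; rewrite /= !in_itv /= => /andP[-> xs]; split=> //.
    exact: le_trans st.
  apply: (@le_trans _ _ (mu ((A `&` snd @^-1` `[0, s]) `|` snd @^-1` `]s, t]))).
    rewrite le_measure ?in_setE //.
    - exact: measurableI.
    - exact: measurableU.
    move=> x [Ax]; rewrite /= !in_itv /= => /andP[x0 xt].
    case: (leP x.2 s) => xs; [left | right];
      by rewrite /= ?in_itv /= ?x0 ?xs ?xt.
  rewrite (le_trans (measureU2 mu mAs (mS `]s, t]))) //.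
  by rewrite [X in (_ + X)%E]gap adde0.
move=> A mA; rewrite /maskm /tmarg /pushforward mu_gap //.
by have := mu_gap setT measurableT; rewrite !setTI => ->.
Qed.

Lemma tmarg_maskm_gt (mu : {measure set T -> \bar R}) (t b : R) :
  tmarg (maskm mu t) `]t, b]%classic = 0%E.
Proof.
rewrite /tmarg /pushforward /maskm (_ : _ `&` _ = set0) ?measure0 ?mul0e //.
apply/seteqP; split=> x //=; rewrite !in_itv /= => -[/andP[tx _] /andP[_ xt]].
by have := lt_le_trans tx xt; rewrite ltxx.
Qed.

Lemma ge0_integral_tmarg_maskm (mu : {measure set T -> \bar R}) (t : R)
    (D : set R) (f : R -> \bar R) :
  measurable D -> measurable_fun D f -> (forall s, D s -> 0 <= f s)%E ->
  (\int[tmarg (maskm mu t)]_(s in D) f s =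
   \int[tmarg mu]_(s in D `&` `[0%R, t]%classic) f s *
     ((fine (tmarg mu `[0%R, t]%classic))^-1)%:E)%E.
Proof.
move=> mD mf f0.
have c0 : 0 <= (fine (tmarg mu `[0, t]%classic))^-1.
  by rewrite invr_ge0 fine_ge0 ?measure_ge0.
have -> : tmarg (maskm mu t) =
    mscale (NngNum c0) (mrestr (tmarg mu) (measurable_itv `[0, t])).
  apply/funext => B.
  by rewrite /= /mscale /= /mrestr /tmarg /pushforward /maskm preimage_setI muleC.
by rewrite (ge0_integral_mscale _ mD _ mf f0) ge0_integral_mrestr // muleC.
Qed.

Lemma maskm_is_prob (P : probability T R) (t : R) :
  (0 < tmarg P `[0%R, t]%classic)%E -> is_prob (maskm P t).
Proof.
move=> Pt0; have mSt := measurable_snd_preimage _ (measurable_itv `[0, t]).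
have : mrestr P mSt setT \is a fin_num.
  by rewrite /= /mrestr setTI fin_num_measure.
rewrite fin_numE => /andP[_ /negbTE PSt_fin].
have /negbTE PSt_neq0 : mrestr P mSt setT != 0%E.
  by rewrite /= /mrestr setTI gt_eqF.
exists (mnormalize (mrestr P mSt) P); apply/funext => A.
by rewrite /= /mnormalize PSt_neq0 PSt_fin /= /mrestr setTI.
Qed.

Lemma Lip_maskm {C sigma : R} {Om : set X} {mu : set T -> \bar R} {t : R} :
  closed Om -> 0 < sigma -> LipCs C sigma Om mu -> I01 t ->
  LipCs C sigma Om (maskm mu t).
Proof.
move=> cOm s0 [[P <-] POm Pzero [K [KOm Kmeas Kdis KW2]]] It.
have /andP[t0 _] : 0 <= t <= 1 by move: It; rewrite /I01 /= in_itv.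
have mI01 : measurable (@I01 R) by exact: measurable_itv.
have mSt := measurable_snd_preimage _ (measurable_itv `[0, t]).
set c := fine (tmarg P `[0, t]%classic).
have Pc : tmarg P `[0, t]%classic = c%:E by rewrite fineK ?fin_num_measure.
have zero_t : [set 0] `<=` `[0, t]%classic.
  by move=> _ ->; rewrite /= in_itv /= lexx t0.
have sigma_c : sigma <= c.
  by rewrite -lee_fin -Pc (le_trans Pzero) // le_measure ?in_setE.
have c0 : 0 < c by exact: lt_le_trans sigma_c.
have c1 : c <= 1 by rewrite -lee_fin -Pc probability_le1.
split.
- by apply: (@maskm_is_prob P); rewrite Pc lte_fin.
- rewrite /maskm -/c setIC.
  rewrite (probability1_setI _ _ _ (measurable_Otilde _ cOm) mSt POm).
  by rewrite [X in (X * _)%E]Pc -EFinM mulfV ?gt_eqF.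
- rewrite /tmarg /pushforward /maskm -/c -preimage_setI (setIidl zero_t).
  rewrite (le_trans Pzero) // lee_pemulr ?measure_ge0 // lee_fin.
  by rewrite invf_ge1.
- exists K; split=> // A B mA mB.
  have mBI := measurableI _ _ mB mI01.
  rewrite ge0_integral_tmarg_maskm //; last first.
    by apply: (measurable_funS mI01 _ (Kmeas A mA)) => s [].
  rewrite -/c setIAC -Kdis //; last exact: measurableI.
  rewrite /maskm -/c; congr (P _ * _)%E.
  by apply/seteqP; split=> -[x s] /=; [move=> [[]] | move=> [? []]].
Qed.

Lemma Lip_e_end {C sigma : R} {Om : set X} {rho : set T -> \bar R} :
  closed Om -> 0 < sigma -> LipCs C sigma Om rho ->
  I01 (e_end (tmarg rho)) /\ tmarg rho `]e_end (tmarg rho), 1]%classic = 0%E.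
Proof.
move=> cOm s0 [[P <-] POm Pzero _].
have supp0 : msupp (tmarg P) 0.
  by apply: msupp_atom; apply: lt_le_trans Pzero; rewrite lte_fin.
have out : tmarg P (~` `[0, 1]%classic) = 0%E.
  have mout : measurable (~` `[0, 1]%classic : set R).
    by apply: measurableC; exact: measurable_itv.
  rewrite /tmarg /pushforward -(probability1_setI _ _ _ (measurable_Otilde _ cOm)
    (measurable_snd_preimage _ mout) POm) (_ : _ `&` _ = set0) ?measure0 //.
  by apply/seteqP; split=> -[x s] //= [ns [_ Is]].
have [e01 gap] := @e_end_itv _ _ 0 1 0 supp0 out.
by split=> //; rewrite /I01 /= in_itv.
Qed.

End masked_measures.

Section reduced_map.
Context {R : realType} {d d' : nat} {C sigma : R} {Om : set 'rV[R]_d}.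
Context {Lam : (set ('rV[R]_d * R) -> \bar R) -> 'rV[R]_d -> R -> 'rV[R]_d'}.
Hypotheses (cOm : closed Om) (sigma_gt0 : 0 < sigma).
Hypotheses (Lam_causal : causal C sigma Om Lam)
  (Lam_ident : identifiable C sigma Om Lam).

Lemma Lam_null_tail nu x t : LipCs C sigma Om nu -> Om x -> I01 t ->
  tmarg nu `]t, 1]%classic = 0%E -> Lam nu x t = Lam nu x 1.
Proof.
move=> Lnu Ox It gap; have [[P eP] _ _ _] := Lnu; subst nu.
have /andP[_ t1] : 0 <= t <= 1 by move: It; rewrite /I01 /= in_itv.
have mask_eq := maskm_null_gap P t1 gap.
rewrite Lam_causal // (Lam_ident _ _ _ Lnu It I01_1 mask_eq x Ox).
by rewrite -Lam_causal //; exact: I01_1.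
Qed.

Lemma reduced_Lip nu x : LipCs C sigma Om nu -> Om x ->
  reduced Lam nu x = Lam nu x 1.
Proof.
move=> Lnu Ox; have [Ie gap] := Lip_e_end cOm sigma_gt0 Lnu.
exact: Lam_null_tail.
Qed.

Lemma Lam_maskm mu x t : LipCs C sigma Om mu -> Om x -> I01 t ->
  Lam mu x t = Lam (maskm mu t) x 1.
Proof.
move=> Lmu Ox It; have Lnu := Lip_maskm cOm sigma_gt0 Lmu It.
have [[P eP] _ _ _] := Lmu; subst mu.
by rewrite Lam_causal // Lam_null_tail // tmarg_maskm_gt.
Qed.

End reduced_map.

Theorem lemma4p7 (R : realType) (d d' : nat) (Om : set 'rV[R]_d) (C sigma : R)
    (Lam : (set ('rV[R]_d * R) -> \bar R) -> 'rV[R]_d -> R -> 'rV[R]_d') :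
  compact Om -> 0 < C -> 0 < sigma < 1 ->
  causal C sigma Om Lam -> identifiable C sigma Om Lam ->
  (forall mu x t, LipCs C sigma Om mu -> Om x -> I01 t ->
     Lam mu x t = reduced Lam (maskm mu t) x) /\
  (Lam_continuous C sigma Om Lam -> reduced_continuous C sigma Om Lam).
Proof.
move=> cptOm _ /andP[s0 _] caus ident.
have cOm : closed Om := compact_closed (@norm_hausdorff _ _) cptOm.
have reducedE mu x t : LipCs C sigma Om mu -> Om x -> I01 t ->
    reduced Lam (maskm mu t) x = Lam (maskm mu t) x 1.
  move=> Lmu Ox It; apply: (reduced_Lip cOm s0 caus ident) => //.
  exact: Lip_maskm.
split=> [mu x t Lmu Ox It|cont nu x [mu [t [Lmu It -> Ox]]] eps eps0].
  by rewrite reducedE // (Lam_maskm cOm s0 caus ident).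
have Lnu := Lip_maskm cOm s0 Lmu It.
have [n [fs [delta [fs_cont delta0 near]]]] := cont _ x 1 Lnu Ox I01_1 eps eps0.
exists n, fs, delta; split=> // _ y [mu' [t' [Lmu' It' -> Oy]]] wc yx.
rewrite !reducedE //; apply: near => //.
- exact: Lip_maskm.
- exact: I01_1.
- by rewrite subrr normr0.
Qed.
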